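(* In the standard LLP setup, for all $N,M\ge1$: $L(G,\gamma^M_{cons})\subseteq L(G,\gamma^N_{optm})$.
   Context: Standard LLP setup. $\Sigma=\Sigma_c\,\dot\cup\,\Sigma_{uc}$ is a finite alphabet partitioned into controllable and uncontrollable events. The plant $G$ has generated language $L(G)$ and marked language $L_m(G)$ with $L(G)=\overline{L_m(G)}$ ($\overline{M}$ = set of prefixes of strings in $M$). The legal language $K\subseteq L_m(G)$ satisfies $K=\overline{K}\cap L_m(G)$. For a prefix-closed $L$, $M$ is controllable w.r.t. $L$ if $\overline{M}\Sigma_{uc}\cap L\subseteq\overline{M}$. For a language $L$ and $s\in\Sigma^*$: $L/s=\{t: st\in L\}$; $L|_N=\{t\in L:|t|\le N\}$; $\Sigma_{L(G)}(s)=\{\sigma\in\Sigma: s\sigma\in L(G)\}$. $M^{\uparrow/s|_N}$ is the supremal sublanguage of $M$ controllable w.r.t. $L(G)/s|_N$. Conservative attitude: $f^N_{cons}(s)=[K/s|_{N-1}]^{\uparrow/s|_N}$; optimistic attitude: $f^N_{optm}(s)=[K/s|_N\cup(\overline{K}/s|_N\setminus\overline{K}/s|_{N-1})]^{\uparrow/s|_N}$. For $a\in\{cons,optm\}$ the control policy is $\gamma^N_a(s)=(\overline{f^N_a(s)}\cap\Sigma)\cup(\Sigma_{uc}\cap\Sigma_{L(G)}(s))$. Closed-loop language $L(G,\gamma)$: $\epsilon\in L(G,\gamma)$, and $s\sigma\in L(G,\gamma)$ iff $s\in L(G,\gamma)$, $s\sigma\in L(G)$, $\sigma\in\gamma(s)$.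 *)

From mathcomp Require Import all_boot.
Set Implicit Arguments. Unset Strict Implicit. Unset Printing Implicit Defensive.

Section LLP.
Variable Sigma : finType.

Definition lang := seq Sigma -> Prop.

Definition pclos (M : lang) : lang := fun t => exists u, M (t ++ u).

Definition quot (L : lang) (s : seq Sigma) : lang := fun t => L (s ++ t).

Definition trunc (L : lang) (N : nat) : lang := fun t => L t /\ size t <= N.

Definition controllable (uc : pred Sigma) (M L : lang) : Prop :=
  forall t (e : Sigma), pclos M t -> uc e -> L (rcons t e) -> pclos M (rcons t e).

Definition supcon (uc : pred Sigma) (L M : lang) : lang :=
  fun t => exists M' : lang,
    [/\ (forall w, M' w -> M w), controllable uc M' L & M' t].

Definition f_cons (uc : pred Sigma) (LG K : lang) (N : nat) (s : seq Sigma) : lang :=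
  supcon uc (trunc (quot LG s) N) (trunc (quot K s) N.-1).

Definition f_optm (uc : pred Sigma) (LG K : lang) (N : nat) (s : seq Sigma) : lang :=
  supcon uc (trunc (quot LG s) N)
    (fun t => trunc (quot K s) N t \/
              (trunc (quot (pclos K) s) N t /\ ~ trunc (quot (pclos K) s) N.-1 t)).

Definition policy (uc : pred Sigma) (LG : lang) (f : seq Sigma -> lang)
  (s : seq Sigma) (e : Sigma) : Prop :=
  pclos (f s) [:: e] \/ (uc e /\ LG (rcons s e)).

Inductive closed_loop (LG : lang) (gam : seq Sigma -> Sigma -> Prop) : lang :=
| cl_nil : closed_loop LG gam [::]
| cl_rcons s e : closed_loop LG gam s -> LG (rcons s e) -> gam s e ->
                 closed_loop LG gam (rcons s e).

End LLP.

From mathcomp Require Import all_boot.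

(* Since both closed loops are generated by the same plant, it suffices to show
   that the conservative policy enables no event the optimistic one disables
   ([closed_loop_mono]).  Uncontrollable plant events are enabled by both; an
   event e enabled because [:: e] prefixes a word of f^M_cons(s) comes from a
   controllable sublanguage M' of K/s|_{M-1} w.r.t. L(G)/s|_M.  Its horizon-N
   cut [cut M' N] -- the prefixes of M' of length at most N that are either
   words of M' or of length exactly N -- keeps every short prefix of M'
   ([pclos_cut]), lies inside the optimistic target language
   ([cut_sub_optm_target]): words of M' belong to K/s, and length-N prefixes
   belong to \overline{K}/s|_N minus \overline{K}/s|_{N-1}, and it is
   controllable w.r.t. L(G)/s|_N ([cut_controllable]).  Hence it is contained
   in f^N_optm(s), and [:: e] is a prefix of one of its words. *)

Section Monotonicity.
Variable Sigma : finType.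
Implicit Types (L P : lang Sigma) (s t : seq Sigma).

Lemma closed_loop_mono L (gam gam' : seq Sigma -> Sigma -> Prop) :
  (forall s e, gam s e -> gam' s e) ->
  forall s, closed_loop L gam s -> closed_loop L gam' s.
Proof.
move=> sub_gam s; elim=> [|t e _ IH Lte gam_te]; first exact: cl_nil.
by apply: cl_rcons => //; apply: sub_gam.
Qed.

Definition cut P (N : nat) : lang Sigma :=
  fun t => [/\ pclos P t, size t <= N & P t \/ size t = N].

(* The cut has the same prefixes of length at most N as P: extend such a
   prefix inside P and stop either at the word of P or at length N. *)
Lemma pclos_cut P N t : pclos P t -> size t <= N -> pclos (cut P N) t.
Proof.
move=> [v Ptv] le_tN.
have [le_tvN | lt_N_tv] := leqP (size (t ++ v)) N.
  by exists v; split=> //; [exists [::]; rewrite cats0 | left].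
have le_N_tv : N - size t <= size v by rewrite leq_subLR -size_cat ltnW.
have size_cut : size (t ++ take (N - size t) v) = N.
  by rewrite size_cat size_takel // subnKC.
exists (take (N - size t) v); split; last by right.
- by exists (drop (N - size t) v); rewrite -catA cat_take_drop.
- by rewrite size_cut.
Qed.

Definition optm_target (K : lang Sigma) s (N : nat) : lang Sigma :=
  fun t => trunc (quot K s) N t \/
           (trunc (quot (pclos K) s) N t /\ ~ trunc (quot (pclos K) s) N.-1 t).

(* Cutting a sublanguage of K/s at a positive horizon N lands in the
   optimistic target: length-N prefixes are "pending" strings of \overline{K}. *)
Lemma cut_sub_optm_target (K M' : lang Sigma) s N :
  1 <= N -> (forall t, M' t -> quot K s t) ->
  forall t, cut M' N t -> optm_target K s N t.
Proof.
move=> N_gt0 sub_M' t; case=> -[v M'tv] le_tN [M't | size_tN].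
  by left; split=> //; apply: sub_M'.
right; split; first by split=> //; exists v; rewrite /quot -catA; apply: sub_M'.
by case=> _; rewrite size_tN -ltnS prednK ?ltnn.
Qed.

Lemma cut_controllable (uc : pred Sigma) (L M' : lang Sigma) M N :
  1 <= M -> (forall t, M' t -> size t <= M.-1) ->
  controllable uc M' (trunc L M) -> controllable uc (cut M' N) (trunc L N).
Proof.
move=> M_gt0 short_M' ctrl_M' t e [v] /= -[[w M'tvw] _ _] uc_e [Lte le_teN].
apply: pclos_cut le_teN; apply: ctrl_M' => //.
  by exists (v ++ w); rewrite catA.
split=> //; rewrite size_rcons -(prednK M_gt0) ltnS.
apply: leq_trans (short_M' _ M'tvw).
by rewrite -catA size_cat leq_addr.
Qed.

Lemma pclos_cons_optm (uc : pred Sigma) (LG K : lang Sigma) N M s t :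
  1 <= N -> 1 <= M -> size t <= N ->
  pclos (f_cons uc LG K M s) t -> pclos (f_optm uc LG K N s) t.
Proof.
move=> N_gt0 M_gt0 le_tN [u [M' [sub_M' ctrl_M' M'tu]]].
have [w cut_tw] : pclos (cut M' N) t by apply: pclos_cut => //; exists u.
exists w; exists (cut M' N); split=> //.
- by apply: cut_sub_optm_target => // r /sub_M' [].
- by apply: cut_controllable ctrl_M' => // r /sub_M' [].
Qed.

Lemma policy_cons_optm (uc : pred Sigma) (LG K : lang Sigma) N M s e :
  1 <= N -> 1 <= M ->
  policy uc LG (f_cons uc LG K M) s e -> policy uc LG (f_optm uc LG K N) s e.
Proof.
move=> N_gt0 M_gt0 [pre_e | uc_e]; last by right.
by left; apply: pclos_cons_optm pre_e.
Qed.

End Monotonicity.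

Theorem theorem8 (Sigma : finType) (uc : pred Sigma) (Lm K : lang Sigma)
  (HKsub : forall t, K t -> Lm t)
  (HKclosed : forall t, K t <-> (pclos K t /\ Lm t))
  (N M : nat) (HN : 1 <= N) (HM : 1 <= M) :
  forall s : seq Sigma,
    closed_loop (pclos Lm) (policy uc (pclos Lm) (f_cons uc (pclos Lm) K M)) s ->
    closed_loop (pclos Lm) (policy uc (pclos Lm) (f_optm uc (pclos Lm) K N)) s.
Proof.
apply: closed_loop_mono => s e.
exact: policy_cons_optm.
Qed.
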